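(* The set $\mathcal{PES}(\mathbb C)$ of perfectly everywhere surjective functions $\mathbb C\to\mathbb C$ is strongly $2^{\mathfrak{c}}$-algebrable in the algebra $\mathbb C^{\mathbb C}$.
   Context: $\mathfrak{c}$ denotes the cardinality of $\mathbb R$. A perfect subset of $\mathbb C$ is a nonempty closed set with no isolated points. A function $f:\mathbb C\to\mathbb C$ is perfectly everywhere surjective if $f(P)=\mathbb C$ for every perfect subset $P\subset\mathbb C$. $\mathbb C^{\mathbb C}$ is the commutative algebra of all functions $\mathbb C\to\mathbb C$ with pointwise operations. A subset $E$ of a commutative algebra $B$ is strongly $\kappa$-algebrable if there exists a set $X=\{x_\alpha:\alpha<\kappa\}\subset B$ of distinct elements such that the set of all monomials $x_{\alpha_1}^{k_1}\cdots x_{\alpha_n}^{k_n}$ ($n\ge1$, distinct $\alpha_i$, $k_i\ge1$) is linearly independent and every nontrivial linear combination of such monomials belongs to $E$ (i.e. $X$ freely generates an algebra contained in $E\cup\{0\}$). *)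

From HB Require Import structures.
From mathcomp Require Import all_boot all_order all_algebra.
From mathcomp Require Import all_classical all_reals all_analysis.
From mathcomp Require Import complex.
Set Implicit Arguments. Unset Strict Implicit. Unset Printing Implicit Defensive.
Import Order.TTheory GRing.Theory Num.Theory.
Import numFieldNormedType.Exports.
Local Open Scope classical_set_scope.
Local Open Scope ring_scope.

Definition perfect_subset {T : topologicalType} (P : set T) : Prop :=
  P !=set0 /\ perfect_set P.

Definition PES {T : topologicalType} (f : T -> T) : Prop :=
  forall P : set T, perfect_subset P -> f @` P = setT.

Definition monomial {I T : Type} {K : comNzRingType} (x : I -> T -> K)
  (n : nat) (a : 'I_n -> I) (e : {ffun 'I_n -> nat}) : T -> K :=
  fun z => \prod_(i < n) (x (a i) z) ^+ (e i).

(* E (a subset of the commutative algebra K^T) is strongly kappa-algebrable,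
   where kappa is the cardinality of the index type I: there are distinct
   x_alpha (alpha in I) such that every nontrivial linear combination of
   pairwise distinct (nonconstant) monomials in distinct generators is
   nonzero (linear independence of the monomials) and lies in E. *)
Definition strongly_algebrable (I T : Type) (K : comNzRingType)
  (E : set (T -> K)) : Prop :=
  exists x : I -> (T -> K), injective x /\
    forall (n : nat) (a : 'I_n -> I), injective a ->
    forall s : seq ({ffun 'I_n -> nat} * K),
      uniq (map fst s) ->
      all (fun p => p.1 != [ffun=> 0%N]) s ->
      has (fun p => p.2 != 0) s ->
      let f := fun z => \sum_(p <- s) p.2 * monomial x a p.1 z in
      f <> (fun _ => 0) /\ E f.

Set Implicit Arguments. Unset Strict Implicit. Unset Printing Implicit Defensive.
From HB Require Import structures.
From mathcomp Require Import all_boot all_order all_algebra.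
From mathcomp Require Import all_classical all_reals all_analysis.
From mathcomp Require Import complex wochoice lra.
Import Order.TTheory GRing.Theory Num.Theory.
Import numFieldNormedType.Exports.
Local Open Scope classical_set_scope.
Local Open Scope ring_scope.
Local Open Scope complex_scope.
Local Notation Re := (@complex.Re _).
Local Notation Im := (@complex.Im _).

(* The generators are x_A z := decode (psi z) A for A ⊆ C, where
   - [decode b] maps subsets of C to C, and for distinct A_1, ..., A_n and any
     values v_1, ..., v_n some code b has decode b A_i = v_i: finitely many
     points separate the A_i, and b lists those points together with a table
     of values indexed by the traces of sets on them;
   - psi : C -> 2^N takes every code on every perfect set; it is built by
     transfinite recursion along a well-ordering of the pairs (perfect set,
     code), since every perfect set contains a Cantor set and so has as many
     points as there are such pairs.
   A nonzero polynomial without constant term maps C^n onto C (Kronecker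
   substitution turns it into a nonconstant polynomial in one variable), so
   every nontrivial combination of monomials in the x_A takes every value on
   every perfect set. *)

Section WellOrder.
Variables (T : eqType) (le : rel T).
Hypothesis le_wo : well_order le.

Let le_chain : wo_chain le predT. Proof. exact: withinW. Qed.

Lemma wo_anti x y : le x y -> le y x -> x = y.
Proof. by move=> xy yx; apply: (wo_chain_antisymmetric le_chain); rewrite ?xy. Qed.

Definition wo_lt x y := le x y && (x != y).

Lemma wo_lt_total x y : x != y -> wo_lt x y \/ wo_lt y x.
Proof.
move=> nxy; rewrite /wo_lt nxy eq_sym nxy.
by case/orP: (wo_chainW le_chain (x:=x) (y:=y) isT isT) => ->; [left|right].
Qed.

Lemma wo_min (A : T -> Prop) : (exists x, A x) ->
  exists2 z, A z & forall y, A y -> le z y.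
Proof.
move=> [x Ax]; have [|z [[Az lbz] _]] := @le_wo [pred u | `[< A u >]].
  by exists x; rewrite inE.
by move: Az; rewrite inE => Az; exists z => // y Ay; apply: lbz; rewrite inE.
Qed.

Lemma wo_lt_wf : well_founded wo_lt.
Proof.
move=> a; apply: contrapT => nAa.
have [z nAz zmin] := wo_min (ex_intro (fun u => ~ Acc wo_lt u) a nAa).
apply: nAz; constructor => y /andP[yz nyz]; apply: contrapT => /zmin zy.
by move: nyz; rewrite (wo_anti yz zy) eqxx.
Qed.

End WellOrder.

Section Bernstein.
Variables (X : choiceType) (D : Type) (Pf : set (set X)) (x0 : X) (d0 : D).
Local Notation T := {classic (set X * D)%type}.

Section Recursion.
Variables (le : rel T) (W : T -> Prop) (req : T -> (set X * D)%type).
Hypothesis le_wo : well_order le.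
Local Notation lt := (wo_lt le).
Hypothesis req_onto : forall P d, Pf P -> exists2 v, W v & req v = (P, d).
Hypothesis segment_small : forall w, W w -> forall P, Pf P -> forall h : T -> X,
  exists2 x, P x & forall v, lt v w -> h v <> x.

Definition active w := W w /\ Pf (req w).1.

Definition extend w (f : forall v, lt v w -> X) : T -> X :=
  fun v => if pselect (lt v w) is left p then f v p else x0.

Definition choose_step w (f : forall v, lt v w -> X) : X :=
  xget x0 [set x | (req w).1 x /\ forall v, lt v w -> extend f v <> x].

Definition chosen : T -> X := Fix (wo_lt_wf le_wo) (fun=> X) choose_step.

Lemma chosenE w : chosen w = @choose_step w (fun v _ => chosen v).
Proof.
rewrite /chosen Fix_eq // => v f g fg; rewrite /choose_step.
suff -> : extend f = extend g by [].
by apply: funext => u; rewrite /extend; case: pselect.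
Qed.

Lemma chosen_fresh w : active w ->
  (req w).1 (chosen w) /\ forall v, lt v w -> chosen v <> chosen w.
Proof.
move=> [Ww Preq]; rewrite chosenE /choose_step.
set S := [set x | _ /\ _].
have [x Px fresh] := segment_small Ww Preq (@extend w (fun v _ => chosen v)).
have [Sx fresh'] : S (xget x0 S) by apply: xgetPex; exists x.
split=> // v vw; have := fresh' v vw; rewrite /extend.
by case: pselect.
Qed.

Lemma chosen_inj v w : active v -> active w -> chosen v = chosen w -> v = w.
Proof.
move=> av aw e; apply: contrapT => /eqP nvw.
case: (wo_lt_total le_wo nvw) => [vw|wv].
- by have [_ /(_ v vw)] := chosen_fresh aw.
- by have [_ /(_ w wv)] := chosen_fresh av; rewrite e.
Qed.

Lemma onto_members_of_requests : exists psi : X -> D,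
  forall P, Pf P -> forall d, exists2 x, P x & psi x = d.
Proof.
pose psi x := if pselect (exists w, active w /\ chosen w = x) is left e
  then (req (projT1 (cid e))).2 else d0.
exists psi => P PP d.
have [v Wv reqv] := req_onto d PP.
have av : active v by split=> //; rewrite reqv.
have [+ _] := chosen_fresh av; rewrite reqv => Pv.
exists (chosen v) => //; rewrite /psi; case: pselect => [e|[]]; last by exists v.
case: (cid e) => w [aw wv] /=.
by rewrite (chosen_inj aw av wv) reqv.
Qed.

End Recursion.

Hypothesis members_large : forall P, Pf P -> exists g : X -> (set X * D)%type,
  forall P' d, Pf P' -> exists2 x, P x & g x = (P', d).

Definition segment_covers (le : rel T) w :=
  exists2 P, Pf P & exists h : T -> X, forall x, P x -> exists2 v, wo_lt le v w & h v = x.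

Lemma not_segment_covers le w : ~ segment_covers le w ->
  forall P, Pf P -> forall h : T -> X, exists2 x, P x & forall v, wo_lt le v w -> h v <> x.
Proof.
move=> ncover P PP h; apply: contrapT => nfresh; apply: ncover; exists P => //.
exists h => x Px; apply: contrapT => nhit.
by apply: nfresh; exists x => // v vw hvx; apply: nhit; exists v.
Qed.

Lemma onto_members : exists psi : X -> D,
  forall P, Pf P -> forall d, exists2 x, P x & psi x = d.
Proof.
have [le le_wo] := well_ordering_principle T.
(* Either recurse along the least initial segment that maps onto a member, so
   that all shorter segments are too small to cover any member, or along the
   whole well-order, none of whose proper segments covers a member. *)
case: (pselect (exists w, segment_covers le w)) => [covers|small].
- have [w0 [P0 PP0 [h0 h0P0]] w0min] := wo_min le_wo covers.
  have [g0 g0P0] := members_large PP0.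
  apply: (@onto_members_of_requests le (fun v => wo_lt le v w0) (g0 \o h0)) => //.
    move=> P d PP; have [x P0x gx] := g0P0 P d PP.
    by have [v vw hv] := h0P0 x P0x; exists v; rewrite //= hv.
  move=> w /andP[ww0 nw]; apply: not_segment_covers => /w0min /(wo_anti le_wo ww0) ew.
  by rewrite ew eqxx in nw.
- apply: (@onto_members_of_requests le (fun=> True) id) => //.
    by move=> P d _; exists (P, d).
  by move=> w _; apply: not_segment_covers => cover; apply: small; exists w.
Qed.

End Bernstein.

Section ComplexNorm.
Variable R : realType.
Implicit Types (w z : R[i]) (a b : R).

Lemma normc_real a : `|a%:C| = `|a|%:C :> R[i].
Proof. by rewrite normc_def /= expr0n addr0 sqrtr_sqr. Qed.

Lemma normc_i : `|'i%C| = 1 :> R[i].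
Proof. by rewrite normc_def /= expr0n add0r expr1n sqrtr1. Qed.

Lemma ReB w z : Re (w - z) = Re w - Re z.
Proof. by case: w => ? ?; case: z => ? ?. Qed.

Lemma ImB w z : Im (w - z) = Im w - Im z.
Proof. by case: w => ? ?; case: z => ? ?; simpc. Qed.

Lemma normc_ge_Im w : `|Im w|%:C <= `|w|.
Proof. by have := normc_ge_Re (w * 'i%C); rewrite ReiNIm normrN normrM normc_i mulr1. Qed.

Lemma normc_le_ReIm w : `|w| <= (`|Re w| + `|Im w|)%:C.
Proof.
rewrite {1}[w]complexE; apply: le_trans (ler_normD _ _) _.
by rewrite normrM normc_i mul1r !normc_real rmorphD.
Qed.

Lemma Re_lt_normc w a : `|w| < a%:C -> `|Re w| < a.
Proof. by rewrite -ltcR; apply: le_lt_trans (normc_ge_Re w). Qed.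

Lemma Im_lt_normc w a : `|w| < a%:C -> `|Im w| < a.
Proof. by rewrite -ltcR; apply: le_lt_trans (normc_ge_Im w). Qed.

Lemma normc_lt_ReIm w a b : `|Re w| <= a -> `|Im w| <= a -> a + a < b -> `|w| < b%:C.
Proof.
move=> ha hb hab; apply: le_lt_trans (normc_le_ReIm w) _.
by rewrite ltcR; apply: le_lt_trans hab; apply: lerD.
Qed.

Lemma gt0_complex_real (e : R[i]) : 0 < e -> e = (Re e)%:C /\ 0 < Re e.
Proof. by case: e => a b; rewrite ltcE /= => /andP[/eqP -> h]. Qed.

End ComplexNorm.

Lemma nested_intervals_sup (R : realType) (c r : nat -> R) :
  (forall k, 0 <= r k) -> (forall k l, (k <= l)%N -> `|c l - c k| <= r k) ->
  forall k, `|sup (range (fun l => c l - r l)) - c k| <= r k.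
Proof.
move=> r0 nested k; set S := range _.
have ub m : ubound S (c m + r m).
  move=> _ [l _ <-]; case: (leqP m l) => ml.
  - by have := nested _ _ ml; rewrite ler_distl => /andP[_ h]; have := r0 l; lra.
  - by have := nested _ _ (ltnW ml); rewrite ler_distl => /andP[h _]; have := r0 m; lra.
have hS : has_ubound S by exists (c 0%N + r 0%N); exact: ub.
rewrite ler_distl; apply/andP; split.
- by apply: ub_le_sup => //; exists k.
- by apply: ge_sup; [exists (c 0%N - r 0%N); exists 0%N | exact: ub].
Qed.

Section CantorScheme.
Variable R : realType.
Variable P : set R[i]^o.
Hypotheses (P_closed : closed P) (P_limit : limit_point P = P).
Variables (p0 : R[i]) (Pp0 : P p0).

Definition in_square (N : R[i] * R) (z : R[i]) :=
  `|Re z - Re N.1| <= N.2 /\ `|Im z - Im N.1| <= N.2.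

Definition good_node (N : R[i] * R) := P N.1 /\ 0 < N.2.

Definition neighbour (N : R[i] * R) (y : R[i]) := [/\ P y, y != N.1,
  `|Re N.1 - Re y| < N.2 / 2 & `|Im N.1 - Im y| < N.2 / 2].

Definition near_point N := xget N.1 (neighbour N).

Definition near_gap N := `|Re N.1 - Re (near_point N)| + `|Im N.1 - Im (near_point N)|.

Definition child N (bt : bool) : R[i] * R :=
  (if bt then near_point N else N.1, Num.min (N.2 / 2) (near_gap N / 8)).

Lemma near_pointP N : good_node N -> neighbour N (near_point N).
Proof.
move=> [PN N0]; apply: xgetPex.
have : limit_point P N.1 by rewrite P_limit.
have r0 : 0 < (N.2 / 2)%:C :> R[i] by rewrite ltcR divr_gt0.
move=> /(_ _ (@nbhsx_ballx _ R[i]^o (N.1 : R[i]^o) _ r0)) [y [yN Py /= yball]].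
by exists y; split; rewrite // -?ReB -?ImB; [apply: Re_lt_normc | apply: Im_lt_normc].
Qed.

Lemma near_gap_gt0 N : good_node N -> 0 < near_gap N.
Proof.
move=> gN; have [_ yN _ _] := near_pointP gN.
rewrite lt_neqAle addr_ge0 // andbT eq_sym paddr_eq0 // !normr_eq0 !subr_eq0.
apply: contra yN; case: (near_point N) => a b; case: N.1 => c d /=.
by case/andP => /eqP <- /eqP <-.
Qed.

Lemma child_good N bt : good_node N -> good_node (child N bt).
Proof.
move=> gN; have [Py _ _ _] := near_pointP gN.
split; first by case: bt; [exact: Py | exact: gN.1].
have := near_gap_gt0 gN; have := gN.2.
by rewrite /child /= lt_min => N0 gap0; apply/andP; split; lra.
Qed.

Lemma child_radius N bt : (child N bt).2 <= N.2 / 2.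
Proof. by rewrite /child /= ge_min lexx. Qed.

Lemma child_sub N bt z : good_node N -> in_square (child N bt) z -> in_square N z.
Proof.
move=> gN; have [_ _ hRe hIm] := near_pointP gN.
have N0 := gN.2; have := child_radius N bt; rewrite /in_square.
case: bt => /= hr [h1 h2]; last by split; lra.
rewrite distrC in hRe; rewrite distrC in hIm.
split; [apply: le_trans (ler_distD (Re (near_point N)) _ _) _ |
        apply: le_trans (ler_distD (Im (near_point N)) _ _) _]; lra.
Qed.

(* The children are squares of radius at most gap/8 around two points at
   l1-distance gap. *)
Lemma child_disjoint N z : good_node N ->
  in_square (child N false) z -> in_square (child N true) z -> False.
Proof.
move=> gN; have := near_gap_gt0 gN; rewrite /in_square /=.
have : Num.min (N.2 / 2) (near_gap N / 8) <= near_gap N / 8 by rewrite ge_min lexx orbT.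
set r := Num.min _ _ => r_gap; rewrite /near_gap => gap0 [a1 a2] [b1 b2].
have := ler_distD (Re z) (Re N.1) (Re (near_point N)).
have := ler_distD (Im z) (Im N.1) (Im (near_point N)).
rewrite distrC in a1; rewrite distrC in a2; move: r_gap; rewrite /near_gap; lra.
Qed.

Fixpoint cantor_node (b : nat -> bool) (k : nat) : R[i] * R :=
  if k is k'.+1 then child (cantor_node b k') (b k') else (p0, 1).

Lemma cantor_node_good b k : good_node (cantor_node b k).
Proof. by elim: k => [|k IH] /=; [split | exact: child_good]. Qed.

Lemma cantor_node_radius b k : (cantor_node b k).2 * k.+1%:R <= 1.
Proof.
elim: k => [|k IH]; first by rewrite mul1r.
change ((child (cantor_node b k) (b k)).2 * k.+2%:R <= 1).
have r0 := (cantor_node_good b k).2; have := child_radius (cantor_node b k) (b k).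
have -> : k.+2%:R = k%:R + 2 :> R by rewrite -addn2 natrD.
rewrite -addn1 natrD in IH; move: IH r0.
set u := (child _ _).2; set v := (cantor_node b k).2 => IH r0 hu.
have k0 : 0 <= k%:R :> R by [].
have p1 : 0 <= (v / 2 - u) * (k%:R + 2) by apply: mulr_ge0; lra.
have p2 : 0 <= v * k%:R by apply: mulr_ge0; lra.
nra.
Qed.

Lemma cantor_node_nested b k l z : (k <= l)%N ->
  in_square (cantor_node b l) z -> in_square (cantor_node b k) z.
Proof.
move=> /subnK <-; elim: (l - k)%N => [|m IH] //= h.
by apply/IH/(child_sub (cantor_node_good b _) h).
Qed.

Definition cantor_point (b : nat -> bool) : R[i] :=
  (sup (range (fun l => Re (cantor_node b l).1 - (cantor_node b l).2))) +i*
  (sup (range (fun l => Im (cantor_node b l).1 - (cantor_node b l).2))).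

Lemma cantor_point_in b k : in_square (cantor_node b k) (cantor_point b).
Proof.
have r0 k' : 0 <= (cantor_node b k').2 by exact: ltW (cantor_node_good b k').2.
have center k' l : (k' <= l)%N -> in_square (cantor_node b k') (cantor_node b l).1.
  by move=> kl; apply: cantor_node_nested kl _; rewrite /in_square !subrr normr0.
by split; apply: (nested_intervals_sup r0) => k' l /center [].
Qed.

Lemma cantor_pointP b : P (cantor_point b).
Proof.
apply: P_closed => U /nbhs_ballP [e e0 eU].
have [eE eps0] := gt0_complex_real e0; set eps := Re e in eE eps0.
have [k kbig] : exists k : nat, 4 / eps < k.+1%:R.
  have h4 : 0 <= 4 / eps by apply/ltW/divr_gt0.
  exists (Num.Def.archi_bound (4 / eps)).
  by apply: lt_le_trans (archi_boundP h4) _; rewrite ler_nat.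
exists (cantor_node b k).1; split; first exact: (cantor_node_good b k).1.
apply: eU; rewrite /ball /= eE; have [hRe hIm] := cantor_point_in b k.
apply: (@normc_lt_ReIm _ _ (cantor_node b k).2); rewrite ?ReB ?ImB //.
have := cantor_node_radius b k; have := (cantor_node_good b k).2.
move: kbig; rewrite ltr_pdivrMr //.
set v := (cantor_node b k).2; set m := k.+1%:R => kbig v0 vm.
have m0 : 0 < m by rewrite ltr0n.
by rewrite -(ltr_pM2r m0); lra.
Qed.

Lemma cantor_node_prefix b b' k : (forall j, (j < k)%N -> b j = b' j) ->
  cantor_node b k = cantor_node b' k.
Proof.
elim: k => [|k IH] //= h; rewrite IH ?h // => j jk; apply/h/ltnW/jk.
Qed.

Lemma cantor_point_inj : injective cantor_point.
Proof.
move=> b b' e; apply: funext => j; apply: contrapT => nb.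
have [m bm mmin] := ex_minnP (ex_intro (fun j => b j != b' j) j (introN eqP nb)).
have prefix : cantor_node b m = cantor_node b' m.
  apply: cantor_node_prefix => i im; apply/eqP; apply: contraTT im => /mmin.
  by rewrite -leqNgt.
have := cantor_point_in b m.+1; have := cantor_point_in b' m.+1.
rewrite /= -prefix -e; have gN := cantor_node_good b m.
by case: (b m) bm; case: (b' m) => //= _ h1 h2;
  [exact: child_disjoint gN h1 h2 | exact: child_disjoint gN h2 h1].
Qed.

End CantorScheme.

Definition code_nth (b : nat -> bool) (j : nat) : nat -> bool :=
  fun k => b (pickle (j, k)).

Definition code_join (s : nat -> nat -> bool) : nat -> bool :=
  fun m => if unpickle m is Some (j, k) then s j k else false.

Lemma code_nth_join s j : code_nth (code_join s) j = s j.
Proof. by apply: funext => k; rewrite /code_nth /code_join pickleK. Qed.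

Definition nat_of_code (b : nat -> bool) : nat := xget 0%N [set k | b k].

Lemma nat_of_code_eq m : nat_of_code (eq_op^~ m) = m.
Proof. by apply/eqP; apply: (@xgetPex _ 0%N [set k | k == m]); exists m => /=. Qed.

Section RealCodes.
Variable R : realType.

Lemma rat_near (x d : R) : 0 < d -> exists q : rat, `|ratr q - x| < d.
Proof.
move=> d0; have xd : x - d < x + d by lra.
have [q] := rat_in_itvoo xd; rewrite in_itv /= => /andP[h1 h2].
by exists q; rewrite ltr_distl; apply/andP; split; lra.
Qed.

Definition rat_of_nat (n : nat) : R :=
  if unpickle n is Some q then ratr q else 0.

Lemma rat_of_natE (q : rat) : rat_of_nat (pickle q) = ratr q.
Proof. by rewrite /rat_of_nat pickleK. Qed.

(* A real number is coded by the set of (indices of) rationals below it. *)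
Definition real_of_code (b : nat -> bool) : R := sup [set rat_of_nat n | n in [set n | b n]].

Lemma real_of_code_surj x : exists b, real_of_code b = x.
Proof.
exists (fun n => rat_of_nat n < x); rewrite /real_of_code.
set S := [set rat_of_nat n | n in _].
have ubS : ubound S x by move=> _ [n /= nx <-]; exact: ltW.
have S0 : S !=set0.
  have [q] : exists q : rat, ratr q \in `]x - 1, x[ by apply: rat_in_itvoo; lra.
  rewrite in_itv /= => /andP[_ qx].
  by exists (ratr q), (pickle q); rewrite /= rat_of_natE.
apply: le_anti; rewrite ge_sup //= leNgt; apply/negP => supx.
have [q] := rat_in_itvoo supx; rewrite in_itv /= => /andP[supq qx].
have : S (ratr q) by exists (pickle q); rewrite /= rat_of_natE.
by move/(ub_le_sup (ex_intro _ x ubS)); rewrite leNgt supq.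
Qed.

Definition complex_of_code (b : nat -> bool) : R[i] :=
  real_of_code (code_nth b 0) +i* real_of_code (code_nth b 1).

Lemma complex_of_code_surj z : exists b, complex_of_code b = z.
Proof.
case: z => x y; have [bx <-] := real_of_code_surj x; have [by_ <-] := real_of_code_surj y.
exists (code_join (fun j => if j == 0%N then bx else by_)).
by rewrite /complex_of_code !code_nth_join.
Qed.

Definition code_of_complex (z : R[i]) : nat -> bool := projT1 (cid (complex_of_code_surj z)).

Lemma code_of_complexK : cancel code_of_complex complex_of_code.
Proof. by move=> z; rewrite /code_of_complex; case: cid. Qed.

Definition rat_ball (n : nat) : set R[i]^o :=
  if unpickle n is Some (x, y, r)
  then ball ((ratr x : R) +i* (ratr y : R) : R[i]^o) (ratr r : R)%:C
  else set0.

(* A closed set is coded by the rational balls missing it. *)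
Definition closed_of_code (b : nat -> bool) : set R[i]^o :=
  ~` \bigcup_(n in [set n | b n]) rat_ball n.

Lemma closed_of_code_surj (P : set R[i]^o) : closed P -> exists b, closed_of_code b = P.
Proof.
move=> P_closed; exists (fun n => `[< rat_ball n `<=` ~` P >]).
apply/seteqP; split => z; last by move=> Pz [n /= /asboolP nP /nP].
move=> notin; apply: contrapT => nPz; apply: notin.
have : nbhs (z : R[i]^o) (~` P) by apply: open_nbhs_nbhs; split=> //; exact: closed_openC.
move=> /nbhs_ballP [e e0 eP].
have [eE eps0] := gt0_complex_real e0; set eps := Re e in eE eps0.
have [qx hx] := rat_near (Re z) (divr_gt0 eps0 (ltr0n R 8)).
have [qy hy] := rat_near (Im z) (divr_gt0 eps0 (ltr0n R 8)).
have [qr] : exists q : rat, ratr q \in `]eps / 4, eps / 2[ by apply: rat_in_itvoo; lra.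
rewrite in_itv /= => /andP[r1 r2].
set c : R[i] := (ratr qx : R) +i* (ratr qy : R).
have cz : `|c - z| < (ratr qr : R)%:C.
  by apply: (@normc_lt_ReIm _ _ (eps / 8)); rewrite ?ReB ?ImB /=; [exact: ltW | exact: ltW | lra].
have ballE : rat_ball (pickle (qx, qy, qr)) = ball (c : R[i]^o) (ratr qr : R)%:C.
  by rewrite /rat_ball pickleK.
exists (pickle (qx, qy, qr)); last by rewrite ballE.
rewrite /= asboolE ballE => y cy; apply: eP; rewrite /ball /= eE.
apply: le_lt_trans (ler_distD c _ _) _; rewrite distrC.
by apply: lt_le_trans (ltrD cz cy) _; rewrite -rmorphD lecR; lra.
Qed.

End RealCodes.

Definition trace (T : Type) (L : seq T) (A : set T) : seq bool := [seq `[< A z >] | z <- L].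

Lemma separating_points (T : eqType) (t0 : T) n (a : 'I_n -> set T) : injective a ->
  exists L : seq T, injective (fun i => trace L (a i)).
Proof.
move=> a_inj.
have [sep sepP] : {sep : 'I_n * 'I_n -> T &
    forall p, p.1 != p.2 -> ~ (a p.1 (sep p) <-> a p.2 (sep p))}.
  apply: (@choice _ _ (fun p z => p.1 != p.2 -> ~ (a p.1 z <-> a p.2 z))) => -[i j] /=.
  case: (eqVneq i j) => [_|ij]; first by exists t0.
  apply: contrapT => nsep; move/eqP: ij; apply; apply: a_inj.
  by apply: funext => z; apply: propext; apply: contrapT => zsep; apply: nsep; exists z.
exists [seq sep p | p <- enum predT] => i j same; apply: contrapT => /eqP ij.
apply: (sepP (i, j) ij); apply: asbool_eq_equiv.
by apply: (eq_in_map _ _ _).2 same _ (map_f sep (mem_enum _ _)).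
Qed.

Section Decoding.
Variable R : realType.

(* The code of [b] holds a finite list of points (length in part 0, points in
   part 1) and a table of values (part 2), indexed by codes of traces. *)
Definition decode (b : nat -> bool) (A : set R[i]) : R[i] :=
  let pts := [seq @complex_of_code R (code_nth (code_nth b 1) j)
             | j <- iota 0 (nat_of_code (code_nth b 0))] in
  @complex_of_code R (code_nth (code_nth b 2) (pickle (trace pts A))).

Lemma decode_interpolates n (a : 'I_n -> set R[i]) : injective a ->
  forall v : 'I_n -> R[i], exists b, forall i, decode b (a i) = v i.
Proof.
move=> a_inj v; have [L L_sep] := separating_points 0 a_inj.
pose table k := if [pick i | pickle (trace L (a i)) == k] is Some i then v i else 0.
have tableE i : table (pickle (trace L (a i))) = v i.
  rewrite /table; case: pickP => [j /eqP/(pcan_inj pickleK)/L_sep -> //|/(_ i)].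
  by rewrite eqxx.
exists (code_join (fun j => if j == 0%N then eq_op^~ (size L)
  else if j == 1%N then code_join (fun k => code_of_complex (nth 0 L k))
  else code_join (fun k => code_of_complex (table k)))) => i.
rewrite /decode !code_nth_join /= nat_of_code_eq code_of_complexK -tableE.
congr (table (pickle (trace _ _))); rewrite -[RHS](mkseq_nth 0) /mkseq.
by apply: eq_map => k; rewrite code_nth_join code_of_complexK.
Qed.

End Decoding.

Lemma uniq_fst_inj (A B : eqType) (s : seq (A * B)) p q :
  uniq (map fst s) -> p \in s -> q \in s -> p.1 = q.1 -> p = q.
Proof.
elim: s => //= x s IH /andP[xs us].
rewrite !inE => /orP[/eqP->|ps] /orP[/eqP->|qs] e //.
- by move: xs; rewrite e (map_f fst qs).
- by move: xs; rewrite -e (map_f fst ps).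
- exact: IH.
Qed.

Section BaseExpansion.
Variable B : nat.
Hypothesis B_gt0 : (0 < B)%N.

Definition base_value n (e : 'I_n -> nat) := (\sum_(i < n) e i * B ^ i)%N.

Lemma base_valueS n (e : 'I_n.+1 -> nat) :
  base_value e = (e ord0 + B * base_value (fun i => e (lift ord0 i)))%N.
Proof.
rewrite /base_value big_ord_recl expn0 muln1 big_distrr; congr addn.
by apply: eq_bigr => i _; rewrite expnS mulnCA.
Qed.

Lemma base_value_inj n (e e' : 'I_n -> nat) :
  (forall i, e i < B)%N -> (forall i, e' i < B)%N ->
  base_value e = base_value e' -> e =1 e'.
Proof.
elim: n e e' => [|n IH] e e' eB e'B; first by move=> _ [].
rewrite !base_valueS => ee'.
have e0 : e ord0 = e' ord0.
  have := congr1 (modn^~ B) ee'.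
  by rewrite ![(e _ + _)%N]addnC ![(e' _ + _)%N]addnC !(mulnC B) !modnMDl !modn_small.
move: ee'; rewrite e0 => /addnI /eqP; rewrite eqn_pmul2l // => /eqP /IH eq_tail i.
by case: (unliftP ord0 i) => [j ->|->] //; apply: eq_tail.
Qed.

End BaseExpansion.

Section PolynomialMaps.
Variable F : closedFieldType.
Variables (n : nat) (s : seq ({ffun 'I_n -> nat} * F)).
Hypotheses (s_uniq : uniq (map fst s)) (s_nonconst : all (fun p => p.1 != [ffun=> 0%N]) s).

Let B := (\max_(p <- s) \max_(i < n) p.1 i).+1.

Let exps_lt_B p : p \in s -> forall i, (p.1 i < B)%N.
Proof.
move=> ps i; rewrite ltnS; apply: leq_trans (leq_bigmax_seq _ ps isT).
exact: leq_bigmax.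
Qed.

(* Kronecker substitution: the monomials of [s] become distinct powers of X. *)
Definition kronecker_poly : {poly F} := \sum_(p <- s) p.2 *: 'X^(base_value B p.1).

Lemma kronecker_polyE t : kronecker_poly.[t] =
  \sum_(p <- s) p.2 * \prod_(i < n) (t ^+ (B ^ i)) ^+ (p.1 i).
Proof.
rewrite horner_sum; apply: eq_bigr => p _; rewrite hornerZ hornerXn /base_value.
by rewrite -prodrXr; congr (_ * _); apply: eq_bigr => i _; rewrite -exprM mulnC.
Qed.

Lemma coef_kronecker_poly p : p \in s -> kronecker_poly`_(base_value B p.1) = p.2.
Proof.
move=> ps; rewrite /kronecker_poly coef_sum (bigD1_seq p) //=; last exact: map_uniq s_uniq.
rewrite coefZ coefXn eqxx mulr1 big_seq_cond big1 ?addr0 // => q /andP[qs qp].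
rewrite coefZ coefXn; case: eqP => [eqB|]; last by rewrite mulr0.
exfalso; move/eqP: qp; apply; apply: (uniq_fst_inj s_uniq) => //.
apply/ffunP => i.
exact: (base_value_inj (isT : 0 < B)%N (exps_lt_B qs) (exps_lt_B ps) (esym eqB)).
Qed.

Lemma base_value_gt0 p : p \in s -> (0 < base_value B p.1)%N.
Proof.
move=> ps; have /allP/(_ p ps) := s_nonconst; apply: contraR.
rewrite -eqn0Ngt sum_nat_eq0 => /forallP p0; apply/eqP/ffunP => i.
by have /implyP/(_ isT) := p0 i; rewrite ffunE muln_eq0 expn_eq0 (negbTE (lt0n_neq0 (isT : 0 < B)%N)) orbF => /eqP.
Qed.

Lemma polynomial_map_surj : has (fun p => p.2 != 0) s ->
  forall w : F, exists v : 'I_n -> F, \sum_(p <- s) p.2 * \prod_(i < n) v i ^+ p.1 i = w.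
Proof.
move=> /hasP[p ps p_nz] w.
have coef_nz : (kronecker_poly - w%:P)`_(base_value B p.1) != 0.
  by rewrite coefB coefC gtn_eqF ?base_value_gt0 // subr0 coef_kronecker_poly.
have size_gt1 : (1 < size (kronecker_poly - w%:P)%R)%N.
  apply: leq_ltn_trans (base_value_gt0 ps) _; rewrite ltnNge.
  by apply: contra coef_nz => /(nth_default (0 : F)) ->.
have /closed_rootP [t /rootP] : size (kronecker_poly - w%:P) != 1%N by rewrite gtn_eqF.
rewrite hornerD hornerN hornerC => /eqP; rewrite subr_eq0 kronecker_polyE => /eqP tw.
by exists (fun i => t ^+ (B ^ i)).
Qed.

End PolynomialMaps.

Lemma injective_ord2 (T : Type) (A A' : T) : A <> A' ->
  injective (fun i : 'I_2 => if i == ord0 then A else A').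
Proof.
by move=> AA' [[|[|i]] ?] [[|[|j]] ?] //= e; try exact/val_inj; case: AA'; rewrite e.
Qed.

Section PerfectlyOntoCodes.
Variable R : realType.

Lemma perfect_subset_setT : perfect_subset [set: R[i]^o].
Proof.
split; first by exists 0.
split; first exact: closedT.
apply/seteqP; split => // z _ U /nbhs_ballP [e /= e0 eU].
have e20 : 0 < e / 2 :> R[i] by rewrite divr_gt0.
exists (z + e / 2); split => //.
- by rewrite -subr_eq0 addrC addKr; apply: lt0r_neq0.
- apply: eU; rewrite /ball /= opprD addrA subrr sub0r normrN gtr0_norm //.
  by rewrite ltr_pdivrMr // ltr_pMr // ltr1n.
Qed.

(* A perfect set contains a Cantor set, which codes every pair of a closed set
   and a code. *)
Lemma perfect_subset_large (P : set R[i]^o) : perfect_subset P ->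
  exists g : R[i]^o -> set R[i]^o * (nat -> bool),
    forall P' d, perfect_subset P' -> exists2 z, P z & g z = (P', d).
Proof.
move=> [[p0 Pp0] [P_closed P_limit]].
pose g (z : R[i]^o) := let b := xget (fun=> false) [set b | cantor_point P p0 b = z] in
  (@closed_of_code R (code_nth b 0), code_nth b 1).
exists g => P' d [_ [P'_closed _]].
have [b' <-] := closed_of_code_surj P'_closed.
pose b := code_join (fun j => if j == 0%N then b' else d).
exists (cantor_point P p0 b); first exact: cantor_pointP.
rewrite /g; set S := [set _ | _].
have /(cantor_point_inj P_limit Pp0) -> : S (xget (fun=> false) S) by apply: xgetPex; exists b.
by rewrite /b !code_nth_join.
Qed.

Lemma perfectly_onto_codes : exists psi : R[i]^o -> (nat -> bool),
  forall P, perfect_subset P -> forall b, exists2 z, P z & psi z = b.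
Proof. exact: (onto_members 0 (fun=> false) perfect_subset_large). Qed.

End PerfectlyOntoCodes.

Theorem theorem3p5 (R : realType) :
  strongly_algebrable (set R[i]) (@PES (R[i])^o).
Proof.
have [psi psiP] := perfectly_onto_codes R.
pose x A (z : R[i]^o) : R[i] := decode (psi z) A.
have interpolate n (a : 'I_n -> set R[i]) (v : 'I_n -> R[i]) P :
    injective a -> perfect_subset P -> exists2 z, P z & forall i, x (a i) z = v i.
  move=> a_inj PP; have [b bv] := decode_interpolates a_inj v.
  by have [z Pz zb] := psiP P PP b; exists z; rewrite // /x zb.
exists x; split.
  move=> A A' xAA'; apply: contrapT => AA'; have a_inj := injective_ord2 AA'.
  have [z _ /[dup] /(_ ord0) /= xA /(_ (lift ord0 ord0)) /= xA'] :=
    interpolate _ _ (fun i => (i != ord0)%:R) _ a_inj (perfect_subset_setT R).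
  by move: (congr1 (@^~ z) xAA'); rewrite xA xA' => /eqP; rewrite eq_sym oner_eq0.
move=> n a a_inj s s_uniq s_nonconst s_nz f.
have f_onto w P : perfect_subset P -> exists2 z, P z & f z = w.
  move=> PP; have [v vw] := polynomial_map_surj s_uniq s_nonconst s_nz w.
  have [z Pz xv] := interpolate n a v P a_inj PP; exists z => //.
  rewrite /f -vw; apply: eq_bigr => p _; congr (_ * _).
  by apply: eq_bigr => i _; rewrite xv.
split.
- move=> f0; have [z _] := f_onto 1 _ (perfect_subset_setT R).
  by rewrite f0 => /eqP; rewrite eq_sym oner_eq0.
- by move=> P PP; apply/seteqP; split=> // w _; have [z Pz fz] := f_onto w P PP; exists z.
Qed.
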